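(* There exists a sequence $\{u_n\}_{n\ge1}\subset\mathscr{X}_1$ which separates the points of $\mathbb{M}^{ac}$ (and hence of $\mathscr{P}^{ac}$), i.e. for any $\mu\neq\nu$ in $\mathbb{M}^{ac}$ there is $n$ with $u_n(\mu)\neq u_n(\nu)$.
   Context: Let $(M,\rho)$ be a Polish space and $\lambda\neq0$ a $\sigma$-finite Radon measure on $M$. $\mathbb{M}$ is the set of finite Borel measures on $M$, $\mathbb{M}^{ac}=\{\mu\in\mathbb{M}:\mu\ll\lambda\}$, $\mathscr{P}^{ac}$ the probability measures in $\mathbb{M}^{ac}$. $\mathscr{X}$ is the class of functions $u(\mu)=g(\mu(f_1),\dots,\mu(f_n))$ on $\mathbb{M}$ with $n\in\mathbb{N}$, $f_i\in C_b(M)$, $g\in C^1_b(\mathbb{R}^n)$, with extrinsic derivative $D^Eu(\mu)(x)=\sum_i\partial_ig(\mu(f_1),\dots,\mu(f_n))f_i(x)$. $\mathscr{X}_1=\{u\in\mathscr{X}:\sup_{\mu\in\mathbb{M}^{ac}}\|D^Eu(\mu)\|_{L^1(\mu)}<\infty\}$. *)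

From HB Require Import structures.
From mathcomp Require Import all_boot all_order all_algebra.
From mathcomp Require Import all_classical all_reals all_analysis.
Set Implicit Arguments. Unset Strict Implicit. Unset Printing Implicit Defensive.
Import Order.TTheory GRing.Theory Num.Theory.
Import numFieldNormedType.Exports.
Local Open Scope classical_set_scope.
Local Open Scope ring_scope.

Definition Borel (M : ptopologicalType) : measurableType (sigma_display (@open M)) :=
  g_sigma_algebraType (@open M).

(* Polish space: (complete) metric space -- complete pseudometric that is
   Hausdorff -- which is separable (has a countable dense subset). *)
Definition polish_hyp (R : realType) (M : completePseudoMetricType R) : Prop :=
  hausdorff_space M /\ exists D : set M, countable D /\ dense D.

Definition radon (M : ptopologicalType) (R : realType)
  (lam : {measure set (Borel M) -> \bar R}) : Prop :=
  (forall x : M, exists U : set M, open U /\ U x /\ (lam U < +oo)%E) /\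
  (forall B : set (Borel M), measurable B ->
     lam B = ereal_sup [set lam K | K in [set K : set M | compact K /\ K `<=` B]]).

Definition Cb (M : ptopologicalType) (R : realType) (f : M -> R) : Prop :=
  continuous f /\ exists C : R, forall x, `|f x| <= C.

Definition unitv (R : realType) (n : nat) (i : 'I_n) : 'rV[R]_n := delta_mx 0 i.

Definition partial (R : realType) (n : nat) (g : 'rV[R]_n -> R) (i : 'I_n)
  (x : 'rV[R]_n) : R := derive g x (unitv R i).

Definition C1b (R : realType) (n : nat) (g : 'rV[R]_n -> R) : Prop :=
  continuous g /\ (exists C : R, forall x, `|g x| <= C) /\
  forall i : 'I_n,
    (forall x, derivable g x (unitv R i)) /\
    continuous (partial g i) /\
    (exists C : R, forall x, `|partial g i x| <= C).

Definition mint (M : ptopologicalType) (R : realType)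
  (mu : {measure set (Borel M) -> \bar R}) (f : M -> R) : R :=
  Rintegral mu setT (f : Borel M -> R).

(* Data of a cylinder function u(mu) = g(mu(f_1),...,mu(f_n)). *)
Record cyl (M : ptopologicalType) (R : realType) := Cyl {
  cyl_n : nat;
  cyl_f : 'I_cyl_n -> M -> R;
  cyl_g : 'rV[R]_cyl_n -> R }.
Arguments cyl_n {M R} c.
Arguments cyl_f {M R} c i x.
Arguments cyl_g {M R} c x.

Definition cyl_args (M : ptopologicalType) (R : realType) (u : cyl M R)
  (mu : {measure set (Borel M) -> \bar R}) : 'rV[R]_(cyl_n u) :=
  \row_i mint mu (cyl_f u i).

Definition cyl_eval (M : ptopologicalType) (R : realType) (u : cyl M R)
  (mu : {measure set (Borel M) -> \bar R}) : R := cyl_g u (cyl_args u mu).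

Definition in_X (M : ptopologicalType) (R : realType) (u : cyl M R) : Prop :=
  (forall i, Cb (cyl_f u i)) /\ C1b (cyl_g u).

Definition DE (M : ptopologicalType) (R : realType) (u : cyl M R)
  (mu : {measure set (Borel M) -> \bar R}) (x : M) : R :=
  \sum_(i < cyl_n u) partial (cyl_g u) i (cyl_args u mu) * cyl_f u i x.

Definition in_Mac (M : ptopologicalType) (R : realType)
  (lam : {measure set (Borel M) -> \bar R})
  (mu : {finite_measure set (Borel M) -> \bar R}) : Prop := mu `<< lam.

Definition in_X1 (M : ptopologicalType) (R : realType)
  (lam : {measure set (Borel M) -> \bar R}) (u : cyl M R) : Prop :=
  in_X u /\
  exists C : R, forall mu : {finite_measure set (Borel M) -> \bar R},
    in_Mac lam mu ->
    (\int[mu]_(x in setT) (`|DE u mu x|)%:E <= C%:E)%E.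

Definition meas_eq (M : ptopologicalType) (R : realType)
  (mu nu : set (Borel M) -> \bar R) : Prop :=
  forall A : set (Borel M), measurable A -> mu A = nu A.

(* A finite Borel measure on a separable pseudometric space is determined by
   its values on open sets, hence, by uniqueness of extension from a pi-system,
   by its values on the countably many finite intersections of balls
   B(e_j, 1/(k+1)) around a dense sequence (e_j).  The measure of an open set V
   is the limit of mu(phi_n), where phi_n is a Urysohn function equal to 0 off V
   and to 1 where dist(., ~V) >= 1/(n+1) (dominated convergence).  Composing
   these countably many functionals with atan gives cylinder functions in X_1:
   d/dt atan t = 1/(1+t^2), so ||D^E u(mu)||_{L^1(mu)} = a/(1+a^2) <= 1 with
   a = mu(phi_n) >= 0, and atan is injective. *)

From HB Require Import structures.
From mathcomp Require Import all_boot all_order all_algebra.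
From mathcomp Require Import all_classical all_reals all_analysis.
From mathcomp Require Import measurable_realfun lra.
Import Order.TTheory GRing.Theory Num.Theory.
Import numFieldNormedType.Exports.
Local Open Scope classical_set_scope.
Local Open Scope ring_scope.

Section urysohn_approximation.
Context {R : realType} {M : pseudoMetricType R}.
Implicit Types (V : set M) (x : M).

Lemma open_edist_lt (a : M) (r : \bar R) : open [set x | (edist (a, x) < r)%E].
Proof.
apply: (@open_comp _ _ (fun x => edist (a, x)) [set y | (y < r)%E]).
  move=> x _; apply: (@continuous_comp _ _ _ (fun y => (a, y)) edist).
    by apply: cvg_pair; [exact: cvg_cst | exact: cvg_id].
  exact: edist_continuous.
exact: open_ereal_lt_ereal.
Qed.

Lemma closed_edist_inf_ge (A : set M) (c : \bar R) :
  closed [set x | (c <= edist_inf A x)%E].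
Proof.
apply: (@preimage_closed _ _ (edist_inf A) [set y | (c <= y)%E]).
  by move=> x _; exact: edist_inf_continuous.
exact: closed_ereal_le_ereal.
Qed.

Lemma edist_inf_setC_gt0 {V x} : open V -> V x -> (0 < edist_inf (~` V) x)%E.
Proof.
move=> oV Vx; have /nbhs_ballP[r r0 rV] : nbhs x V by exact: open_nbhs_nbhs.
apply: (@lt_le_trans _ _ r%:E); first by rewrite lte_fin.
apply: le_ereal_inf_tmp => _ [y nVy <-]; rewrite leNgt; apply/negP.
by move=> /edist_lt_ball/rV.
Qed.

Definition inner_approx V (n : nat) : set M :=
  [set x | ((n.+1%:R)^-1%:E <= edist_inf (~` V) x)%E].

Definition urysohn_approx V (n : nat) : M -> R :=
  Urysohn (~` V) (inner_approx V n).

Lemma continuous_urysohn_approx V n : continuous (urysohn_approx V n).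
Proof. exact: Urysohn_continuous. Qed.

Lemma urysohn_approx_01 V n x : 0 <= urysohn_approx V n x <= 1.
Proof.
have := @Urysohn_range M R _ _ (urysohn_approx V n x) (ex_intro2 _ _ x I erefl).
by rewrite /= in_itv.
Qed.

Lemma uniform_separator_inner_approx V n :
  open V -> uniform_separator (~` V) (inner_approx V n).
Proof.
move=> oV; apply: (proj1 (@normal_separatorP R M) pseudometric_normal).
- exact: open_closedC.
- exact: closed_edist_inf_ge.
- apply/seteqP; split => // x [nVx]; rewrite /inner_approx /= edist_inf0 //.
  by rewrite lee_fin leNgt invr_gt0 ltr0Sn.
Qed.

Lemma urysohn_approx_eq0 V n x : open V -> ~ V x -> urysohn_approx V n x = 0.
Proof.
move=> oV nVx.
by apply: (Urysohn_sub0 (uniform_separator_inner_approx V n oV)); exists x.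
Qed.

Lemma urysohn_approx_eq1 V n x :
  open V -> inner_approx V n x -> urysohn_approx V n x = 1.
Proof.
move=> oV Ix.
by apply: (Urysohn_sub1 (uniform_separator_inner_approx V n oV)); exists x.
Qed.

Lemma inner_approx_eventually {V x} :
  open V -> V x -> \forall n \near \oo, inner_approx V n x.
Proof.
move=> oV Vx; have d_gt0 := edist_inf_setC_gt0 oV Vx.
have [d_oo|d_noo] := eqVneq (edist_inf (~` V) x) +oo%E.
  by apply: nearW => n; rewrite /inner_approx /= d_oo leey.
have d_fin : edist_inf (~` V) x \is a fin_num by rewrite fin_numE d_noo andbT.
move: d_gt0; rewrite -(fineK d_fin) lte_fin => d_gt0.
apply: filterS (near_infty_natSinv_lt (PosNum d_gt0)) => n /= /ltW.
by rewrite /inner_approx /= -(fineK d_fin) lee_fin.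
Qed.

Lemma urysohn_approx_cvg V x :
  open V -> urysohn_approx V n x @[n --> \oo] --> (\1_V x : R).
Proof.
move=> oV; apply: cvg_near_cst; rewrite indicE.
have [Vx|nVx] := pselect (V x); last first.
  by rewrite memNset //; apply: nearW => n; exact: urysohn_approx_eq0.
rewrite mem_set //; apply: filterS (inner_approx_eventually oV Vx) => n.
exact: urysohn_approx_eq1.
Qed.

End urysohn_approximation.

Section mint_of_continuous.
Context {R : realType} {T : ptopologicalType}.
Variable mu : {finite_measure set (Borel T) -> \bar R}.

Lemma continuous_Borel_measurable (f : T -> R) :
  continuous f -> measurable_fun [set: Borel T] f.
Proof.
move=> /continuousP cf.
apply: (measurability _ (RGenOpens.measurableE R)).
move=> _ [_ [a [b ->] <-]]; rewrite setTI; apply: sub_sigma_algebra.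
exact/cf/interval_open.
Qed.

Lemma integrable_unit_valued {f : T -> R} :
  continuous f -> (forall x, 0 <= f x <= 1) ->
  mu.-integrable [set: Borel T] (EFin \o f).
Proof.
move=> cf f01.
apply: (le_integrable measurableT _ _
  (finite_measure_integrable_cst mu 1 measurableT)).
- by apply/measurable_EFinP; exact: continuous_Borel_measurable.
- move=> x _ /=; rewrite lee_fin normr1 ger0_norm; by have /andP[] := f01 x.
Qed.

Lemma EFin_mint (f : T -> R) :
  mu.-integrable [set: Borel T] (EFin \o f) ->
  (mint mu f)%:E = (\int[mu]_x (f x)%:E)%E.
Proof.
by move=> intf; rewrite /mint /Rintegral fineK // integrable_fin_num.
Qed.

Lemma mint_ge0 {f : T -> R} : (forall x, 0 <= f x) -> 0 <= mint mu f.
Proof. by move=> f_ge0; apply: Rintegral_ge0 => x _. Qed.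

End mint_of_continuous.

Lemma mint_urysohn_approx_cvg {R : realType} {M : pseudoPMetricType R}
    (mu : {finite_measure set (Borel M) -> \bar R}) {V : set M} :
  open V -> (mint mu (urysohn_approx V n))%:E @[n --> \oo] --> mu V.
Proof.
move=> oV.
have mV : measurable (V : set (Borel M)) by exact: sub_sigma_algebra.
have ua_int n := integrable_unit_valued mu (continuous_urysohn_approx V n)
  (urysohn_approx_01 V n).
have ua_cvg x : (urysohn_approx V n x)%:E @[n --> \oo] --> (\1_V x : R)%:E.
  by apply/fine_cvgP; split; [exact: nearW | exact: urysohn_approx_cvg].
have ua_le1 n x : (`|(urysohn_approx V n x)%:E| <= (cst 1%R x)%:E)%E.
  by rewrite /= lee_fin ger0_norm; have /andP[] := urysohn_approx_01 V n x.
have [_ _] := dominated_convergence measurableT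
  (fun n => measurable_int _ (ua_int n))
  ((measurable_EFinP _ _).2 (@measurable_indic _ (Borel M) R setT V mV))
  (aeW mu (fun x : Borel M => fun=> ua_cvg x))
  (finite_measure_integrable_cst mu 1 measurableT)
  (aeW mu (fun (x : Borel M) n (_ : setT x) => ua_le1 n x)).
rewrite integral_indic // setIT; apply: cvg_trans; apply: near_eq_cvg.
by apply: nearW => n /=; rewrite EFin_mint.
Qed.

Lemma finite_measure_open_eq_mint {R : realType} {M : pseudoPMetricType R}
    (mu nu : {finite_measure set (Borel M) -> \bar R}) (V : set M) :
  open V ->
  (forall n, mint mu (urysohn_approx V n) = mint nu (urysohn_approx V n)) ->
  mu V = nu V.
Proof.
move=> oV eq_mint; have mu_cvg := mint_urysohn_approx_cvg mu oV.
rewrite (eq_cvg _ _ (fun n => congr1 EFin (eq_mint n))) in mu_cvg.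
exact: cvg_unique mu_cvg (mint_urysohn_approx_cvg nu oV).
Qed.

Section separable_basis.
Context {R : realType} {M : pseudoPMetricType R} (e : nat -> M).
Hypothesis dense_e : dense (range e).

(* [ball] need not be open in a general pseudometric space, hence [edist]. *)
Definition basic_ball (p : nat * nat) : set M :=
  [set x | (edist (e p.1, x) < (p.2.+1%:R^-1)%:E)%E].

Definition basic_open (s : seq (nat * nat)) : set M :=
  \big[setI/setT]_(p <- s) basic_ball p.

Lemma open_basic_open s : open (basic_open s).
Proof.
apply: big_ind => [|U V|p _]; first exact: openT; first exact: openI.
exact: open_edist_lt.
Qed.

Lemma basic_open_cat s t : basic_open (s ++ t) = basic_open s `&` basic_open t.
Proof. exact: big_cat. Qed.

Lemma basic_open1 p : basic_open [:: p] = basic_ball p.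
Proof. exact: big_seq1. Qed.

Lemma basic_ball_refine {U : set M} {x : M} :
  open U -> U x -> exists2 p, basic_ball p x & basic_ball p `<=` U.
Proof.
move=> oU Ux; have /nbhs_ballP[r r_gt0 rU] : nbhs x U by exact: open_nbhs_nbhs.
have r2_gt0 : 0 < r / 2 by rewrite divr_gt0.
have [N _ /(_ N (leqnn N)) /= N_lt] := near_infty_natSinv_lt (PosNum r2_gt0).
set c := N.+1%:R^-1 in N_lt.
have [y [xy [j _ ejy]]] : [set y | (edist (x, y) < c%:E)%E] `&` range e !=set0.
  apply: dense_e; last exact: open_edist_lt.
  by exists x; rewrite /= edist_refl lte_fin invr_gt0 ltr0Sn.
rewrite -ejy in xy.
exists (j, N); first by rewrite /basic_ball /= edist_sym.
move=> z ejz; apply: rU; apply: (@edist_lt_ball _ _ r (x, z)).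
apply: (le_lt_trans (edist_triangle x (e j) z)).
apply: (@lt_le_trans _ _ (c%:E + c%:E)%E); first exact: lteD.
by rewrite -EFinD lee_fin; lra.
Qed.

Lemma open_bigcup_basic_ball {U : set M} :
  open U -> U = \bigcup_(p in [set p | basic_ball p `<=` U]) basic_ball p.
Proof.
move=> oU; apply/seteqP; split => [x Ux|x [p pU /pU] //].
by have [p px pU] := basic_ball_refine oU Ux; exists p.
Qed.

Lemma Borel_measurable_basic_open :
  @measurable _ (Borel M) = <<s range basic_open >>.
Proof.
apply/seteqP; split; last first.
  apply: smallest_sub; first exact: sigma_algebra_measurable.
  by move=> _ [s _ <-]; apply: sub_sigma_algebra; exact: open_basic_open.
apply: smallest_sub; first exact: smallest_sigma_algebra.
move=> U oU; rewrite (open_bigcup_basic_ball oU) bigcup_mkcond.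
apply: (@countable_bigcupT_measurable _
  (g_sigma_algebraType (range basic_open))).
  exact: countableP.
move=> p; case: ifP => _; last exact: measurable0.
by apply: sub_sigma_algebra; exists [:: p]; rewrite ?basic_open1.
Qed.

End separable_basis.

Lemma finite_measure_eq_mint_basic {R : realType} {M : pseudoPMetricType R}
    {e : nat -> M} (mu nu : {finite_measure set (Borel M) -> \bar R}) :
  dense (range e) ->
  (forall s n, mint mu (urysohn_approx (basic_open e s) n) =
               mint nu (urysohn_approx (basic_open e s) n)) ->
  meas_eq mu nu.
Proof.
move=> dense_e eq_mint A mA.
apply: (@measure_unique _ R (Borel M) (range (basic_open e)) (fun=> setT)
  (Borel_measurable_basic_open e dense_e) _ _ _ mu nu) => //.
- by move=> _ _ [s _ <-] [t _ <-]; exists (s ++ t); rewrite ?basic_open_cat.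
- by move=> _; exists [::]; rewrite ?/basic_open ?big_nil.
- by rewrite bigcup_const.
- move=> _ [s _ <-]; apply: finite_measure_open_eq_mint => //.
  exact: open_basic_open.
- by move=> _; rewrite -ge0_fin_numE ?fin_num_measure.
Qed.

Lemma countable_dense_range {T : ptopologicalType} {D : set T} :
  countable D -> dense D -> exists e : nat -> T, dense (range e).
Proof.
move=> /pcard_surjP[e De] dD; exists e => O O0 oO.
have [x [Ox Dx]] := dD O O0 oO.
by exists x; split => //; have [n _ <-] := De x Dx; exists n.
Qed.

Section atan_cylinder.
Context {R : realType}.

Lemma is_derive_row1 (h : R -> R) (a : 'rV[R]_1) (dh : R) :
  is_derive (a 0 0) 1 h dh -> is_derive a (unitv R 0) (fun x => h (x 0 0)) dh.
Proof.
have quotE : (fun t : R => t^-1 *: (h ((t *: unitv R 0 + a) 0 0) - h (a 0 0))) =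
             (fun t : R => t^-1 *: (h (t *: 1 + a 0 0) - h (a 0 0))).
  by apply/funext => t; rewrite !mxE /= mulr1 -[t%:A]/(t * 1) mulr1.
move=> [dh_ex dh_val]; split; rewrite /derivable /derive /= quotE //.
Qed.

Definition atan_coord (x : 'rV[R]_1) : R := atan (x 0 0).

Lemma is_derive_atan_coord (a : 'rV[R]_1) :
  is_derive a (unitv R 0) atan_coord (1 + a 0 0 ^+ 2)^-1.
Proof. exact: is_derive_row1. Qed.

Lemma partial_atan_coord :
  partial atan_coord 0 = fun x => (1 + x 0 0 ^+ 2)^-1.
Proof. by apply/funext => x; have [_] := is_derive_atan_coord x. Qed.

Lemma C1b_atan_coord : C1b atan_coord.
Proof.
have sqrD1_gt0 (y : R) : 0 < 1 + y ^+ 2 by rewrite ltr_pwDl // sqr_ge0.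
split; [|split].
- move=> x; apply: continuous_comp; first exact: coord_continuous.
  exact: continuous_atan.
- exists (pi / 2) => x; rewrite ler_norml.
  by rewrite !ltW ?atan_gtNpi2 ?atan_ltpi2.
move=> i; rewrite (ord1 i); split; [|split].
- by move=> x; have [] := is_derive_atan_coord x.
- rewrite partial_atan_coord => x.
  apply: (@continuous_comp _ _ _ (fun y : 'rV[R]_1 => y 0 0)
    (fun y => (1 + y ^+ 2)^-1)); first exact: coord_continuous.
  apply: cvgV; first by rewrite lt0r_neq0.
  by apply: cvgD; [exact: cvg_cst | apply: cvgM; exact: cvg_id].
- exists 1 => x; rewrite partial_atan_coord ger0_norm; last first.
    by rewrite invr_ge0 ltW.
  by rewrite invf_le1 // lerDl sqr_ge0.
Qed.

Definition atan_cyl {T : ptopologicalType} (f : T -> R) : cyl T R :=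
  @Cyl T R 1 (fun=> f) atan_coord.

Lemma cyl_eval_atan_cyl {T : ptopologicalType} (f : T -> R)
    (mu : {measure set (Borel T) -> \bar R}) :
  cyl_eval (atan_cyl f) mu = atan (mint mu f).
Proof. by rewrite /cyl_eval /cyl_args /= /atan_coord mxE. Qed.

Lemma DE_atan_cyl {T : ptopologicalType} (f : T -> R)
    (mu : {measure set (Borel T) -> \bar R}) (x : T) :
  DE (atan_cyl f) mu x = (1 + mint mu f ^+ 2)^-1 * f x.
Proof. by rewrite /DE big_ord1 partial_atan_coord /cyl_args /= mxE. Qed.

Lemma in_X1_atan_cyl {T : ptopologicalType}
    (lam : {measure set (Borel T) -> \bar R}) (f : T -> R) :
  continuous f -> (forall x, 0 <= f x <= 1) -> in_X1 lam (atan_cyl f).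
Proof.
move=> cf f01; have f_ge0 x : 0 <= f x by have /andP[] := f01 x.
split.
  split; last exact: C1b_atan_coord.
  move=> i; split => //; exists 1 => x.
  by rewrite ger0_norm //; have /andP[] := f01 x.
exists 1 => mu _.
have a_ge0 : 0 <= mint mu f := mint_ge0 mu f_ge0.
have c_ge0 : 0 <= (1 + mint mu f ^+ 2)^-1 by rewrite invr_ge0 addr_ge0 ?sqr_ge0.
under eq_integral do rewrite DE_atan_cyl ger0_norm ?mulr_ge0 // EFinM.
rewrite ge0_integralZl_EFin //; last 2 first.
- by move=> x _; rewrite lee_fin.
- by apply/measurable_EFinP; exact: continuous_Borel_measurable.
rewrite -EFin_mint ?(integrable_unit_valued mu cf f01) // -EFinM lee_fin.
set a := mint mu f in a_ge0 *.
rewrite mulrC ler_pdivrMr ?mul1r; last by rewrite ltr_pwDl // sqr_ge0.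
nra.
Qed.

End atan_cylinder.

Theorem lemma2p6 (R : realType) (M : completePseudoMetricType R)
  (lam : {measure set (Borel M) -> \bar R}) :
  polish_hyp M ->
  sigma_finite setT lam ->
  radon lam ->
  (exists A : set (Borel M), measurable A /\ lam A <> 0%E) ->
  exists u : nat -> cyl M R,
    (forall k, in_X1 lam (u k)) /\
    (forall mu nu : {finite_measure set (Borel M) -> \bar R},
       in_Mac lam mu -> in_Mac lam nu -> ~ meas_eq mu nu ->
       exists k, cyl_eval (u k) mu <> cyl_eval (u k) nu).
Proof.
move=> [_ [D [countD denseD]]] _ _ _.
have [e dense_e] := countable_dense_range countD denseD.
(* [unpickle] is onto the pairs [(s, n)]; other indices get a default pair. *)
pose index k : seq (nat * nat) * nat := odflt ([::], 0%N) (unpickle k).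
pose f k := urysohn_approx (basic_open e (index k).1) (index k).2.
exists (fun k => atan_cyl (f k)); split.
  move=> k; apply: in_X1_atan_cyl; first exact: continuous_urysohn_approx.
  exact: urysohn_approx_01.
move=> mu nu _ _ mu_neq_nu; apply: contrapT => /forallNP eval_eq.
apply/mu_neq_nu/(finite_measure_eq_mint_basic mu nu dense_e) => s n.
have /contrapT := eval_eq (pickle (s, n)).
by rewrite !cyl_eval_atan_cyl /f /index pickleK => /(can_inj (@atanK R)).
Qed.
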